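(* Let $\lambda>1$ be fixed and let $D_U,D_V$ be the $n\times n$ symmetric matrices $D_U=W_2^{-1}-W_2^{-1}B-B^TW_2^{-1}+B^TW_2^{-1}B$, $D_V=W_1^{-1}-A^TW_1^{-1}-W_1^{-1}A$, where $A=K_V^0(I+\Sigma_2)^{-1}$, $W_1=K_V^0-K_V^0(I+\Sigma_2)^{-1}K_V^0$, $B=K_U^0(K_U^0+\Sigma_1)^{-1}$, $W_2=K_U^0-K_U^0(K_U^0+\Sigma_1)^{-1}K_U^0$ for given symmetric positive definite $K_U^0,K_V^0,\Sigma_1,\Sigma_2$ with $K_U^0+K_V^0=I$. Let $D_U-\lambda D_V=H\,\mathrm{diag}(b_1,\dots,b_n)\,H^T$ be an eigen-decomposition with $H$ orthogonal. Then the optimal solution of $$\max_{K_U}\ -\mathrm{tr}(D_UK_U)-\lambda\,\mathrm{tr}(D_V(I-K_U))+\ln|K_U|+\lambda\ln|I-K_U|\quad\text{s.t. } 0\prec K_U\prec I$$ is $K_U=H\,\mathrm{diag}(a_1,\dots,a_n)\,H^T$, where for $i=1,\dots,n$, $$a_i=\begin{cases}\dfrac{1}{1+\lambda}, & b_i=0,\\[2mm] \dfrac{(\lambda+1+b_i)-\sqrt{(\lambda+1+b_i)^2-4b_i}}{2b_i}, & b_i\neq0.\end{cases}$$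
   Context: $|M|$ denotes the determinant; $0\prec K_U\prec I$ means $K_U$ and $I-K_U$ are positive definite. *)

From HB Require Import structures.
From mathcomp Require Import all_boot all_order all_algebra.
From mathcomp Require Import all_classical all_reals all_analysis.
Set Implicit Arguments. Unset Strict Implicit. Unset Printing Implicit Defensive.
Import Order.TTheory GRing.Theory Num.Theory.
Local Open Scope ring_scope.

Definition posdef (R : realType) (n : nat) (M : 'M[R]_n) : Prop :=
  M^T = M /\ forall v : 'cV[R]_n, v != 0 -> 0 < (v^T *m M *m v) 0 0.

Definition feasible (R : realType) (n : nat) (K : 'M[R]_n) : Prop :=
  posdef K /\ posdef (1%:M - K).

Definition objective (R : realType) (n : nat) (lam : R) (DU DV K : 'M[R]_n) : R :=
  - \tr (DU *m K) - lam * \tr (DV *m (1%:M - K))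
  + ln (\det K) + lam * ln (\det (1%:M - K)).

Definition a_coef (R : realType) (lam b : R) : R :=
  if b == 0 then 1 / (1 + lam)
  else ((lam + 1 + b) - Num.sqrt ((lam + 1 + b) ^+ 2 - 4 * b)) / (2 * b).

(* Conjugating by H turns the objective into
   F(X) = - sum_i b_i X_ii + ln|X| + lam ln|I - X|  with X = H^T K H,
   up to an additive constant.  Hadamard's inequality |P| <= prod_i P_ii for
   P > 0, with equality iff P is diagonal (by induction on the Schur complement
   of the first diagonal entry), bounds F(X) by sum_i g_i(X_ii), where
   g_i(x) = - b_i x + ln x + lam ln(1 - x) is strictly concave on (0, 1) with
   stationary point a_i.  Equality throughout forces X = diag(a). *)

From HB Require Import structures.
From mathcomp Require Import all_boot all_order all_algebra.
From mathcomp Require Import all_classical all_reals all_analysis.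
From mathcomp Require Import ring lra.
Set Implicit Arguments. Unset Strict Implicit. Unset Printing Implicit Defensive.
Import Order.TTheory GRing.Theory Num.Theory.
Local Open Scope ring_scope.

Definition schur_complement (R : fieldType) n (P : 'M[R]_(1 + n)) : 'M[R]_n :=
  drsubmx P - (P ord0 ord0)^-1 *: (dlsubmx P *m ursubmx P).

Lemma ulsubmx_scalar (R : fieldType) n (P : 'M[R]_(1 + n)) :
  ulsubmx P = (P ord0 ord0)%:M.
Proof.
by apply/matrixP => i j; rewrite !ord1 !mxE eqxx mulr1n; congr (P _ _); apply: val_inj.
Qed.

Lemma det_schur_complement (R : fieldType) n (P : 'M[R]_(1 + n)) :
  P ord0 ord0 != 0 -> \det P = P ord0 ord0 * \det (schur_complement P).
Proof.
move=> c0; set c := P ord0 ord0.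
pose L : 'M[R]_(1 + n) := block_mx 1%:M 0 (- c^-1 *: dlsubmx P) 1%:M.
have LP : L *m P = block_mx c%:M (ursubmx P) 0 (schur_complement P).
  rewrite -[P in L *m P]submxK mulmx_block ulsubmx_scalar -/c !mul1mx !mul0mx !addr0.
  rewrite mul_mx_scalar scalerA mulrN mulfV // scaleN1r addNr.
  by rewrite -scalemxAl scaleNr addrC.
have := congr1 determinant LP.
by rewrite det_mulmx det_lblock !det1 !mul1r det_ublock det_scalar1.
Qed.

Lemma eq_diag_mx (R : nzRingType) n (X : 'M[R]_n) (d : 'rV[R]_n) :
  (X == diag_mx d) = is_diag_mx X && [forall i, X i i == d 0 i].
Proof.
apply/eqP/andP => [->|[/is_diag_mxP Xdiag /forallP Xii]].
  by split; [exact: diag_mx_is_diag | apply/forallP => i; rewrite mxE eqxx].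
apply/matrixP => i j; rewrite mxE; have [<-|ij] := eqVneq i j.
  by rewrite mulr1n; apply/eqP.
by rewrite mulr0n Xdiag.
Qed.

Section PositiveDefinite.
Variable R : realType.

Lemma posdef_diag_gt0 n (P : 'M[R]_n) : posdef P -> forall i, 0 < P i i.
Proof.
case=> _ Ppos i; have := Ppos (delta_mx i 0).
rewrite trmx_delta -rowE -colE !mxE; apply.
by apply/matrix0Pn; exists i, 0; rewrite mxE !eqxx oner_neq0.
Qed.

Lemma posdef_conj n (P G : 'M[R]_n) :
  G *m G^T = 1%:M -> posdef P -> posdef (G^T *m P *m G).
Proof.
move=> GG [PT Ppos]; split; first by rewrite !trmx_mul trmxK PT mulmxA.
move=> v v0; have := Ppos (G *m v); rewrite trmx_mul !mulmxA; apply.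
apply: contra v0 => /eqP Gv0.
by rewrite -[v]mul1mx -(mulmx1C GG) -mulmxA Gv0 mulmx0.
Qed.

Lemma posdef_diag_mx n (d : 'rV[R]_n) :
  (forall i, 0 < d 0 i) -> posdef (diag_mx d).
Proof.
move=> d_gt0; split; first exact: tr_diag_mx.
move=> v /matrix0Pn[i [j vi]]; rewrite ord1 in vi.
rewrite mul_mx_diag !mxE (eq_bigr (fun k => d 0 k * v k 0 ^+ 2)) => [|k _]; last first.
  by rewrite !mxE; ring.
rewrite (bigD1 i) //= ltr_wpDr ?sumr_ge0 // => [k _|].
  by rewrite mulr_ge0 ?sqr_ge0 ?ltW.
by rewrite mulr_gt0 // lt0r sqrf_eq0 vi sqr_ge0.
Qed.

Lemma posdef_schur_complement n (P : 'M[R]_(1 + n)) :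
  posdef P -> posdef (schur_complement P).
Proof.
move=> PD; have [PT Ppos] := PD; set c := P ord0 ord0.
have c0 : 0 < c := posdef_diag_gt0 PD ord0.
set u := ursubmx P.
have dlP : dlsubmx P = u^T by rewrite /u trmx_ursub PT.
have PE : P = block_mx c%:M u u^T (drsubmx P) by rewrite -dlP -ulsubmx_scalar submxK.
split.
  by rewrite /schur_complement linearB /= linearZ /= trmx_mul dlP trmxK trmx_drsub PT.
(* x is chosen so that the first block of P x vanishes. *)
move=> w w0; pose x := col_mx (- (c^-1 *: (u *m w))) w.
have Px : P *m x = col_mx 0 (schur_complement P *m w).
  rewrite [in LHS]PE mul_block_col mul_scalar_mx scalerN scalerA mulfV ?gt_eqF //.
  rewrite scale1r addNr /schur_complement dlP -/c -/u.
  by rewrite mulmxBl mulmxN -scalemxAr -scalemxAl mulmxA addrC.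
rewrite -mulmxA; have := Ppos x; rewrite -mulmxA Px tr_col_mx mul_row_col mulmx0 add0r; apply.
by apply: contra w0; rewrite col_mx_eq0 => /andP[_].
Qed.

Lemma det_posdef_gt0 n (P : 'M[R]_n) : posdef P -> 0 < \det P.
Proof.
elim: n P => [|n IH] P PD; first by rewrite det_mx00.
have c0 := posdef_diag_gt0 PD ord0.
rewrite (det_schur_complement (lt0r_neq0 c0)) mulr_gt0 //.
exact/IH/posdef_schur_complement.
Qed.

Lemma hadamard_schur_complement n (P : 'M[R]_(1 + n)) : posdef P ->
  let S := schur_complement P in
  \det S <= \prod_i S i i ?= iff is_diag_mx S ->
  \det P <= \prod_i P i i ?= iff is_diag_mx P.
Proof.
move=> PD S hadS; have [PT _] := PD; set c := P ord0 ord0.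
have c0 : 0 < c := posdef_diag_gt0 PD ord0.
set u := ursubmx P; set Q := drsubmx P.
have dlP : dlsubmx P = u^T by rewrite /u trmx_ursub PT.
have SD : posdef S := posdef_schur_complement PD.
have prodP : \prod_i P i i = c * \prod_i Q i i.
  rewrite big_ord_recl; congr (_ * _); apply: eq_bigr => i _.
  by rewrite !mxE; congr (P _ _); apply: val_inj.
have S_le_Q i : S i i <= Q i i ?= iff (u 0 i == 0).
  have -> : S i i = Q i i - c^-1 * u 0 i ^+ 2.
    by rewrite /S /schur_complement dlP !mxE big_ord1 !mxE expr2.
  apply/leifP; have [->|ui] := eqVneq (u 0 i) 0; first by rewrite expr0n mulr0 subr0.
  by rewrite gtrBl mulr_gt0 ?invr_gt0 // lt0r sqrf_eq0 ui sqr_ge0.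
have Q_gt0 i : 0 < Q i i := lt_le_trans (posdef_diag_gt0 SD i) (S_le_Q i).1.
have prodS : \prod_i S i i <= \prod_i Q i i ?= iff (u == 0).
  have := leif_pprod (P := xpredT) (fun i _ => ltW (posdef_diag_gt0 SD i)) (fun i _ => S_le_Q i).
  rewrite /= gt_eqF ?prodr_gt0 //=; congr (_ <= _ ?= iff _).
  apply/forallP/eqP => [u0|-> i]; last by rewrite mxE eqxx.
  by apply/rowP => i; apply/eqP; rewrite [X in _ == X]mxE; exact: u0 i.
have diagPE : is_diag_mx P = is_diag_mx S && (u == 0).
  rewrite -[P]submxK ulsubmx_scalar dlP is_diag_block_mx // mx11_is_diag trmx_eq0.
  have [u0|] := eqVneq u 0; last by rewrite andbF.
  by rewrite /S /schur_complement dlP -/u u0 mulmx0 scaler0 subr0 andbT /=.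
rewrite (det_schur_complement (lt0r_neq0 c0)) prodP diagPE (mono_leif (ler_pM2l c0)).
exact: leif_trans hadS prodS.
Qed.

Lemma hadamard_leif n (P : 'M[R]_n) : posdef P ->
  \det P <= \prod_i P i i ?= iff is_diag_mx P.
Proof.
elim: n P => [|n IH] P PD.
  rewrite det_mx00 big_ord0; apply/leifP.
  by rewrite (_ : is_diag_mx P) //; apply/is_diag_mxP => -[].
exact/(hadamard_schur_complement PD)/IH/posdef_schur_complement.
Qed.

Lemma feasible_diag_gt0_lt1 n (X : 'M[R]_n) : feasible X -> forall i, 0 < X i i < 1.
Proof.
case=> /posdef_diag_gt0 X_gt0 /posdef_diag_gt0 Y_gt0 i; rewrite X_gt0 /=; move: (Y_gt0 i).
by rewrite !mxE eqxx mulr1n subr_gt0.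
Qed.

Lemma feasible_conj n (K G : 'M[R]_n) :
  G *m G^T = 1%:M -> feasible K -> feasible (G^T *m K *m G).
Proof.
move=> GG [PK PIK]; split; first exact: posdef_conj.
have -> : 1%:M - G^T *m K *m G = G^T *m (1%:M - K) *m G.
  by rewrite mulmxBr mulmxBl mulmx1 (mulmx1C GG).
exact: posdef_conj.
Qed.

Lemma feasible_diag_mx n (d : 'rV[R]_n) :
  (forall i, 0 < d 0 i < 1) -> feasible (diag_mx d).
Proof.
move=> d01; split; first by apply: posdef_diag_mx => i; case/andP: (d01 i).
rewrite -diag_const_mx -linearB /=; apply: posdef_diag_mx => i.
by rewrite !mxE subr_gt0; case/andP: (d01 i).
Qed.

End PositiveDefinite.

Lemma ln_leif (R : realType) (y : R) : 0 < y -> ln y <= y - 1 ?= iff (y == 1).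
Proof.
move=> y0; apply/leifP; have [->|y1] := eqVneq y 1; first by rewrite ln1 subrr.
rewrite ltrBrDl -[ltRHS]lnK ?posrE // expR_gt1Dx // ln_eq0 //.
Qed.

Lemma ln_prod (R : realType) (I : Type) (r : seq I) (F : I -> R) :
  (forall i, 0 < F i) -> ln (\prod_(i <- r) F i) = \sum_(i <- r) ln (F i).
Proof.
move=> F_gt0; elim: r => [|i r IH]; first by rewrite !big_nil ln1.
by rewrite !big_cons lnM ?posrE ?F_gt0 ?prodr_gt0 // IH.
Qed.

Section OptimalCoefficient.
Variables (R : realType) (lam b : R).
Hypothesis lam_gt0 : 0 < lam.

Local Notation s := (lam + 1 + b).
Local Notation r := (Num.sqrt (s ^+ 2 - 4 * b)).

Let r_sqr : r ^+ 2 = s ^+ 2 - 4 * b.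
Proof.
rewrite sqr_sqrtr // (_ : s ^+ 2 - 4 * b = (b + lam - 1) ^+ 2 + 4 * lam); last by ring.
by rewrite addr_ge0 ?sqr_ge0 ?mulr_ge0 ?ltW.
Qed.

Let sr_gt2 : 2 < s + r.
Proof.
have r0 : 0 <= r := sqrtr_ge0 _.
rewrite ltNge; apply/negP => sr2.
have : 0 <= (2 - s - r) * (2 - s + r) by rewrite mulr_ge0 //; lra.
rewrite (_ : _ * _ = 4 * (- lam)); first by rewrite pmulr_rge0 // oppr_ge0 leNgt lam_gt0.
by rewrite -subr_sqr r_sqr; ring.
Qed.

(* The rationalized form also covers b = 0: s + r is the larger root of
   t^2 - 2 s t + 4 b, which a_coef_stationary rests on. *)
Lemma a_coefE : a_coef lam b = 2 / (s + r).
Proof.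
have sr0 : s + r != 0 by rewrite gt_eqF // (lt_trans _ sr_gt2).
rewrite /a_coef; have [b0|b0] := eqVneq b 0.
  rewrite b0 mulr0 subr0 addr0 sqrtr_sqr ger0_norm; last by rewrite addr_ge0 ?ltW.
  by field; rewrite !gt_eqF //; have := lam_gt0; lra.
apply/eqP; rewrite eqr_div ?mulf_neq0 //; apply/eqP.
by rewrite -subr_sqr r_sqr; ring.
Qed.

Lemma a_coef_gt0 : 0 < a_coef lam b.
Proof. by rewrite a_coefE divr_gt0 // (lt_trans _ sr_gt2). Qed.

Lemma a_coef_lt1 : a_coef lam b < 1.
Proof. by rewrite a_coefE ltr_pdivrMr ?mul1r // (lt_trans _ sr_gt2). Qed.

Lemma a_coef_stationary : (a_coef lam b)^-1 - lam / (1 - a_coef lam b) = b.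
Proof.
have t2 := sr_gt2; rewrite a_coefE.
have t_root : (s + r) ^+ 2 - 2 * s * (s + r) + 4 * b = 0.
  by rewrite sqrrD r_sqr; ring.
move: t2 t_root; set t := s + r => t2 t_root.
have t0 : t != 0 by rewrite gt_eqF // (lt_trans _ t2).
have t2n0 : t - 2 != 0 by rewrite subr_eq0 gt_eqF.
have : ((2 / t)^-1 - lam / (1 - 2 / t) - b) * (2 * (t - 2)) = 0.
  by rewrite -t_root; field; rewrite t0 t2n0.
by move/eqP; rewrite !mulf_eq0 pnatr_eq0 (negbTE t2n0) /= orbF subr_eq0 => /eqP.
Qed.

End OptimalCoefficient.

Definition scalar_objective (R : realType) (lam b x : R) : R :=
  - b * x + ln x + lam * ln (1 - x).

Lemma scalar_objective_leif (R : realType) (lam b x : R) : 0 < lam -> 0 < x < 1 ->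
  scalar_objective lam b x <= scalar_objective lam b (a_coef lam b)
  ?= iff (x == a_coef lam b).
Proof.
move=> lam0 /andP[x0]; rewrite -subr_gt0 => x1; set a := a_coef lam b.
have a0 : 0 < a := a_coef_gt0 b lam0.
have a1 : 0 < 1 - a by rewrite subr_gt0 a_coef_lt1.
have lnx : ln x = ln (x / a) + ln a by rewrite ln_div ?posrE // subrK.
have lnx' : ln (1 - x) = ln ((1 - x) / (1 - a)) + ln (1 - a).
  by rewrite ln_div ?posrE // subrK.
(* Bounding both logarithms by their tangents at 1, the linear terms cancel
   because a is a stationary point. *)
have tangent : (x / a - 1) + lam * ((1 - x) / (1 - a) - 1) = b * (x - a).
  rewrite -(a_coef_stationary b lam0) -/a; field.
  by rewrite !gt_eqF.
have ln_1x := (ln_leif (divr_gt0 x1 a1)).1.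
apply/leifP; have [->|xa] := eqVneq x a; first exact: eqxx.
have ln_x : ln (x / a) < x / a - 1.
  rewrite (lt_leif (ln_leif (divr_gt0 x0 a0))); apply: contra xa => /eqP xa1.
  by rewrite -[x](divfK (lt0r_neq0 a0)) xa1 mul1r.
rewrite /scalar_objective lnx lnx'.
have := ler_wpM2l (ltW lam0) ln_1x; nra.
Qed.

Section DiagonalizedObjective.
Variables (R : realType) (n : nat) (lam : R) (b : 'rV[R]_n).

Definition diag_objective (X : 'M[R]_n) : R :=
  - \sum_i b 0 i * X i i + ln (\det X) + lam * ln (\det (1%:M - X)).

Lemma sum_scalar_objective (x : 'I_n -> R) :
  \sum_i scalar_objective lam (b 0 i) (x i) =
  - \sum_i b 0 i * x i + \sum_i ln (x i) + lam * \sum_i ln (1 - x i).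
Proof.
rewrite !big_split /= -sumrN mulr_sumr.
by congr (_ + _ + _); apply: eq_bigr => i _; rewrite mulNr.
Qed.

Lemma diag_objective_diag_mx (x : 'rV[R]_n) : (forall i, 0 < x 0 i < 1) ->
  diag_objective (diag_mx x) = \sum_i scalar_objective lam (b 0 i) (x 0 i).
Proof.
move=> x01; have x_gt0 i : 0 < x 0 i by case/andP: (x01 i).
have x_lt1 i : 0 < 1 - x 0 i by case/andP: (x01 i); rewrite subr_gt0.
rewrite sum_scalar_objective /diag_objective -diag_const_mx -linearB /= !det_diag.
rewrite (ln_prod _ x_gt0) ln_prod => [|i]; last by rewrite !mxE.
congr (- _ + _ + lam * _); apply: eq_bigr => i _; first by rewrite mxE eqxx mulr1n.
by rewrite !mxE.
Qed.

Lemma diag_objective_leif_sum (X : 'M[R]_n) : 0 <= lam -> feasible X ->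
  diag_objective X <= \sum_i scalar_objective lam (b 0 i) (X i i) ?= iff is_diag_mx X.
Proof.
move=> lam0 fX; have [PX PY] := fX; have X01 := feasible_diag_gt0_lt1 fX.
apply/leifP; case: ifPn => [Xdiag|XnD].
  have XE : X = diag_mx (\row_i X i i).
    by apply/eqP; rewrite eq_diag_mx Xdiag; apply/forallP => i; rewrite mxE.
  rewrite [in diag_objective X]XE diag_objective_diag_mx => [|i]; last by rewrite mxE.
  by apply/eqP; apply: eq_bigr => i _; rewrite mxE.
have X_gt0 i : 0 < X i i by case/andP: (X01 i).
have X_lt1 i : 0 < 1 - X i i by case/andP: (X01 i); rewrite subr_gt0.
have lnX : ln (\det X) < \sum_i ln (X i i).
  rewrite -(ln_prod _ X_gt0) ltr_ln ?posrE ?det_posdef_gt0 ?prodr_gt0 //.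
  by rewrite (lt_leif (hadamard_leif PX)) XnD.
have lnY : ln (\det (1%:M - X)) <= \sum_i ln (1 - X i i).
  rewrite -(ln_prod _ X_lt1) ler_ln ?posrE ?det_posdef_gt0 ?prodr_gt0 //.
  rewrite (le_trans (hadamard_leif PY).1) // le_eqVlt; apply/orP; left.
  by apply/eqP/eq_bigr => i _; rewrite !mxE eqxx mulr1n.
rewrite sum_scalar_objective /diag_objective ltr_leD ?ler_wpM2l //.
by rewrite ltrD2l.
Qed.

Lemma diag_objective_leif (X : 'M[R]_n) : 0 < lam -> feasible X ->
  let a := \row_i a_coef lam (b 0 i) in
  diag_objective X <= diag_objective (diag_mx a) ?= iff (X == diag_mx a).
Proof.
move=> lam0 fX a; have X01 := feasible_diag_gt0_lt1 fX.
have a01 i : 0 < a 0 i < 1 by rewrite mxE a_coef_gt0 ?a_coef_lt1.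
rewrite diag_objective_diag_mx // eq_diag_mx.
have := leif_sum (P := xpredT) (fun i _ => scalar_objective_leif (b 0 i) lam0 (X01 i)).
move/(leif_trans (diag_objective_leif_sum (ltW lam0) fX)).
by congr (_ <= _ ?= iff _ && _); [apply: eq_bigr => i _ | apply: eq_forallb => i]; rewrite mxE.
Qed.

End DiagonalizedObjective.

Lemma objective_conj (R : realType) n (lam : R) (DU DV H : 'M[R]_n) (b : 'rV[R]_n) K :
  H *m H^T = 1%:M -> DU - lam *: DV = H *m diag_mx b *m H^T ->
  objective lam DU DV K = diag_objective lam b (H^T *m K *m H) - lam * \tr DV.
Proof.
move=> HH DUV; have HtH : H^T *m H = 1%:M := mulmx1C HH.
have detC M : \det (H^T *m M *m H) = \det M.
  by rewrite !det_mulmx mulrAC -det_mulmx HtH det1 mul1r.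
have trC : \tr ((DU - lam *: DV) *m K) = \sum_i b 0 i * (H^T *m K *m H) i i.
  rewrite DUV -!mulmxA mxtrace_mulC !mulmxA /mxtrace.
  by apply: eq_bigr => i _; rewrite -!mulmxA mul_diag_mx mxE.
have IC : 1%:M - H^T *m K *m H = H^T *m (1%:M - K) *m H.
  by rewrite mulmxBr mulmxBl mulmx1 HtH.
rewrite /objective /diag_objective IC !detC -trC mulmxBl -scalemxAl mulmxBr mulmx1.
rewrite !raddfB /= mxtraceZ; ring.
Qed.

Theorem theorem5 (R : realType) (n : nat) (lam : R)
  (KU0 KV0 S1 S2 H : 'M[R]_n) (b : 'rV[R]_n) :
  1 < lam ->
  posdef KU0 -> posdef KV0 -> posdef S1 -> posdef S2 ->
  KU0 + KV0 = 1%:M ->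
  let A := KV0 *m invmx (1%:M + S2) in
  let W1 := KV0 - KV0 *m invmx (1%:M + S2) *m KV0 in
  let B := KU0 *m invmx (KU0 + S1) in
  let W2 := KU0 - KU0 *m invmx (KU0 + S1) *m KU0 in
  let DU := invmx W2 - invmx W2 *m B - B^T *m invmx W2 + B^T *m invmx W2 *m B in
  let DV := invmx W1 - A^T *m invmx W1 - invmx W1 *m A in
  H *m H^T = 1%:M ->
  DU - lam *: DV = H *m diag_mx b *m H^T ->
  let Kopt := H *m diag_mx (\row_i a_coef lam (b 0 i)) *m H^T in
  feasible Kopt /\
  (forall K : 'M[R]_n, feasible K -> objective lam DU DV K <= objective lam DU DV Kopt) /\
  (forall K : 'M[R]_n, feasible K -> K != Kopt ->
     objective lam DU DV K < objective lam DU DV Kopt).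
Proof.
(* Only the eigen-decomposition of DU - lam DV matters, not how DU and DV
   arise from KU0, KV0, S1 and S2. *)
move=> lam1 _ _ _ _ _ A W1 B W2 DU DV HH DUV Kopt.
have lam0 : 0 < lam := lt_trans ltr01 lam1.
have HtH : H^T *m H = 1%:M := mulmx1C HH.
pose a := \row_i a_coef lam (b 0 i).
have conjK K : H *m (H^T *m K *m H) *m H^T = K.
  by rewrite !mulmxA HH mul1mx -mulmxA HH mulmx1.
have XKopt : H^T *m Kopt *m H = diag_mx a.
  by rewrite /Kopt !mulmxA HtH mul1mx -mulmxA HtH mulmx1.
have opt K : feasible K ->
    objective lam DU DV K <= objective lam DU DV Kopt ?= iff (K == Kopt).
  move=> fK; rewrite !(objective_conj _ HH DUV) XKopt (mono_leif (lerD2r _)).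
  have -> : (K == Kopt) = (H^T *m K *m H == diag_mx a).
    by apply/eqP/eqP => [->|XK]; [exact: XKopt | rewrite -(conjK K) XK].
  by apply: diag_objective_leif => //; apply: feasible_conj.
have a01 i : 0 < a 0 i < 1 by rewrite mxE a_coef_gt0 ?a_coef_lt1.
have HtHt : H^T *m H^T^T = 1%:M by rewrite trmxK.
split; first by have := feasible_conj HtHt (feasible_diag_mx a01); rewrite trmxK.
split=> [K /opt /leifP|K /opt/lt_leif ->//]; case: eqP => [-> | _] //; exact: ltW.
Qed.
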